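(* Let $f:[0,\infty)\rightarrow\mathbb{R}$ be a continuous function which is $3$-convex, nondecreasing and concave. Then \[ f(|A|)+f(|B|)+f(|C|)+f(|A+B+C|)\geq f(|A+B|)+f(|B+C|)+f(|C+A|)+f(0)I_n \] in the Löwner order, whenever $A,B,C$ are real symmetric $n\times n$ matrices that commute with each other.
   Context: For a real symmetric matrix $A$, $|A|=(A^2)^{1/2}$ is its modulus (a positive semidefinite matrix), and for a positive semidefinite matrix $M=U\operatorname{diag}(\lambda_1,\dots,\lambda_n)U^{T}$ with $U$ orthogonal, $f(M)=U\operatorname{diag}(f(\lambda_1),\dots,f(\lambda_n))U^{T}$. $I_n$ is the $n\times n$ identity matrix. The Löwner order: $X\leq Y$ iff $\langle X\mathbf{x},\mathbf{x}\rangle\leq\langle Y\mathbf{x},\mathbf{x}\rangle$ for all $\mathbf{x}\in\mathbb{R}^n$. A real function $f$ on an interval is $3$-convex if for all $x_0<x_1<x_2<x_3$ in the interval, $\sum_{j=0}^{3}\frac{f(x_j)}{\prod_{k\neq j}(x_j-x_k)}\geq0$. *)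

From HB Require Import structures.
From mathcomp Require Import all_boot all_order all_algebra.
From mathcomp Require Import all_classical all_reals all_analysis.
Set Implicit Arguments. Unset Strict Implicit. Unset Printing Implicit Defensive.
Import Order.TTheory GRing.Theory Num.Theory.
Local Open Scope classical_set_scope.
Local Open Scope ring_scope.

Section Defs.
Variable R : realType.

Definition orth_diagonalizes n (M U : 'M[R]_n) (d : 'rV[R]_n) : Prop :=
  U *m U^T = 1%:M /\ M = U *m diag_mx d *m U^T.

(* f(M) := U diag(f(d_1),...,f(d_n)) U^T for a chosen orthogonal
   diagonalization M = U diag(d) U^T (junk value 0 if none exists). *)
Definition mxfun n (f : R -> R) (M : 'M[R]_n) : 'M[R]_n :=
  let Ud := xget (0, 0) [set Ud : 'M[R]_n * 'rV[R]_n |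
                         orth_diagonalizes M Ud.1 Ud.2] in
  Ud.1 *m diag_mx (map_mx f Ud.2) *m Ud.1^T.

Definition mxabs n (A : 'M[R]_n) : 'M[R]_n := mxfun (@Num.sqrt R) (A *m A).

Definition loewner_le n (X Y : 'M[R]_n) : Prop :=
  forall x : 'cV[R]_n, (x^T *m X *m x) 0 0 <= (x^T *m Y *m x) 0 0.

Definition three_convex_nonneg (f : R -> R) : Prop :=
  forall x0 x1 x2 x3 : R, 0 <= x0 -> x0 < x1 -> x1 < x2 -> x2 < x3 ->
    0 <= f x0 / ((x0 - x1) * (x0 - x2) * (x0 - x3))
       + f x1 / ((x1 - x0) * (x1 - x2) * (x1 - x3))
       + f x2 / ((x2 - x0) * (x2 - x1) * (x2 - x3))
       + f x3 / ((x3 - x0) * (x3 - x1) * (x3 - x2)).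

Definition nondecreasing_nonneg (f : R -> R) : Prop :=
  forall x y : R, 0 <= x -> x <= y -> f x <= f y.

Definition concave_nonneg (f : R -> R) : Prop :=
  forall (x y t : R), 0 <= x -> 0 <= y -> 0 <= t -> t <= 1 ->
    t * f x + (1 - t) * f y <= f (t * x + (1 - t) * y).
End Defs.

(* Commuting real symmetric matrices have a common orthonormal eigenbasis: they share a
   complex eigenvector, hence a real one, and a Householder reflection taking it to the
   first basis vector splits it off as a 1 x 1 block.  In that basis every term is
   diagonal, so the inequality reduces to the scalar one
     f|a| + f|b| + f|c| + f|a+b+c| >= f|a+b| + f|b+c| + f|c+a| + f 0
   at the eigenvalues.  For a, b, c >= 0 its defect is the mixed third difference of f,
   a positive combination of increases of second divided differences under a shift,
   which 3-convexity makes nonnegative.  Up to symmetry and a global sign change the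
   remaining case is a, b >= 0 >= c: if a + b <= -c it is again a mixed third difference,
   and otherwise it follows from monotonicity and the subadditivity of f - f 0, which
   comes from concavity. *)

From HB Require Import structures.
From mathcomp Require Import all_boot all_order all_algebra.
From mathcomp Require Import all_classical all_reals all_analysis.
From mathcomp Require Import ring lra complex.
Set Implicit Arguments. Unset Strict Implicit. Unset Printing Implicit Defensive.
Import Order.TTheory GRing.Theory Num.Theory.
Import numFieldNormedType.Exports.
Local Open Scope classical_set_scope.
Local Open Scope ring_scope.

Section ThreeConvex.
Variable R : realType.
Implicit Types (f : R -> R) (x y z w a b c : R).

Definition divdiff3 f x y z :=
  f x / ((x - y) * (x - z)) + f y / ((y - x) * (y - z)) + f z / ((z - x) * (z - y)).

Definition divdiff4 f x y z w :=
  f x / ((x - y) * (x - z) * (x - w)) + f y / ((y - x) * (y - z) * (y - w))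
  + f z / ((z - x) * (z - y) * (z - w)) + f w / ((w - x) * (w - y) * (w - z)).

Lemma divdiff3_replace f x y z w : x < y -> y < z -> z < w ->
  [/\ divdiff3 f x y w - divdiff3 f x y z = (w - z) * divdiff4 f x y z w,
      divdiff3 f x z w - divdiff3 f x y w = (z - y) * divdiff4 f x y z w
    & divdiff3 f y z w - divdiff3 f x z w = (y - x) * divdiff4 f x y z w].
Proof.
move=> xy yz zw; have xz := lt_trans xy yz; have yw := lt_trans yz zw.
have xw := lt_trans xz zw.
rewrite /divdiff3 /divdiff4; split; field;
  by rewrite !subr_eq0 !neq_lt xy yz zw xz yw xw ?orbT.
Qed.

Lemma divdiff3_shift_le f x y z c : three_convex_nonneg f ->
  0 <= x -> x < y -> y < z -> 0 < c ->
  divdiff3 f x y z <= divdiff3 f (x + c) (y + c) (z + c).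
Proof.
move=> h3 x0 xy yz c0.
(* Shift [z], then [y], then [x]. *)
have shift u : u < u + c by rewrite ltrDl.
have xy' : x + c < y + c by rewrite ltrD2r.
have yz' : y + c < z + c by rewrite ltrD2r.
have [+ _ _] := divdiff3_replace f xy yz (shift z).
have [_ + _] := divdiff3_replace f xy (shift y) yz'.
have [_ _ +] := divdiff3_replace f (shift x) xy' yz'.
have d1 : 0 <= divdiff4 f x y z (z + c) := h3 _ _ _ _ x0 xy yz (shift z).
have d2 : 0 <= divdiff4 f x y (y + c) (z + c) := h3 _ _ _ _ x0 xy (shift y) yz'.
have d3 : 0 <= divdiff4 f x (x + c) (y + c) (z + c) := h3 _ _ _ _ x0 (shift x) xy' yz'.
have := mulr_ge0 (ltW c0) d1; have := mulr_ge0 (ltW c0) d2; have := mulr_ge0 (ltW c0) d3.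
have cK u : u + c - u = c by rewrite addrAC subrr add0r.
rewrite !cK; lra.
Qed.

Definition mixed_diff3 f a b c :=
  f (a + b + c) - f (a + b) - f (b + c) - f (c + a) + f a + f b + f c - f 0.

(* The bound is [a b (a + b)] times
   [divdiff3 f c (a + c) (a + b + c) - divdiff3 f 0 a (a + b)]. *)
Lemma mixed_diff3_half_ge0 f a b c : three_convex_nonneg f -> 0 < a -> 0 < b -> 0 < c ->
  0 <= b * (f c - f 0) - (a + b) * (f (a + c) - f a) + a * (f (a + b + c) - f (a + b)).
Proof.
move=> h3 a0 b0 c0.
have ab0 : 0 < a + b := addr_gt0 a0 b0.
have ab : a < a + b by rewrite ltrDl.
have := divdiff3_shift_le h3 (lexx 0) a0 ab c0.
rewrite -subr_ge0 -(pmulr_rge0 _ (mulr_gt0 (mulr_gt0 a0 b0) ab0)).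
suff -> : a * b * (a + b) * (divdiff3 f (0 + c) (a + c) (a + b + c) - divdiff3 f 0 a (a + b))
  = b * (f c - f 0) - (a + b) * (f (a + c) - f a) + a * (f (a + b + c) - f (a + b)) by [].
rewrite add0r /divdiff3; field.
by rewrite !subr_eq0 (gt_eqF ab) (gt_eqF ab0) (lt_eqF ab) (gt_eqF a0) !lt_eqF //; lra.
Qed.

Lemma mixed_diff3C f a b c : mixed_diff3 f a b c = mixed_diff3 f b a c.
Proof. by rewrite /mixed_diff3 (addrC b a) (addrC c a) (addrC b c); lra. Qed.

Lemma mixed_diff3AC f a b c : mixed_diff3 f a b c = mixed_diff3 f a c b.
Proof. by rewrite /mixed_diff3 (addrAC a b c) (addrC a c) (addrC b c) (addrC b a); lra. Qed.

Lemma mixed_diff3_ge0 f a b c : three_convex_nonneg f ->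
  0 <= a -> 0 <= b -> 0 <= c -> 0 <= mixed_diff3 f a b c.
Proof.
move=> h3; rewrite le_eqVlt => /predU1P[<- _ _ | a0].
  by rewrite /mixed_diff3 !add0r addr0; lra.
rewrite le_eqVlt => /predU1P[<- _ | b0].
  by rewrite /mixed_diff3 !addr0 add0r (addrC c a); lra.
rewrite le_eqVlt => /predU1P[<- | c0].
  by rewrite /mixed_diff3 !addr0 add0r; lra.
have h1 := mixed_diff3_half_ge0 h3 a0 b0 c0.
have h2 := mixed_diff3_half_ge0 h3 b0 a0 c0.
rewrite -(pmulr_rge0 _ (addr_gt0 a0 b0)).
suff -> : (a + b) * mixed_diff3 f a b c =
  (b * (f c - f 0) - (a + b) * (f (a + c) - f a) + a * (f (a + b + c) - f (a + b))) +
  (a * (f c - f 0) - (b + a) * (f (b + c) - f b) + b * (f (b + a + c) - f (b + a)))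
  by exact: addr_ge0.
by rewrite /mixed_diff3 (addrC b a) (addrC c a); ring.
Qed.

Lemma concave_subadditive f x y : concave_nonneg f -> 0 <= x -> 0 <= y ->
  f (x + y) + f 0 <= f x + f y.
Proof.
move=> hc x0 y0; have [s0|s_gt0] := eqVneq (x + y) 0.
  have [-> ->] : x = 0 /\ y = 0 by split; lra.
  by rewrite addr0.
have s0 : 0 < x + y by rewrite lt_def s_gt0 addr_ge0.
set t := x / (x + y).
have t0 : 0 <= t by rewrite divr_ge0 // ltW.
have t1 : t <= 1 by rewrite ler_pdivrMr // mul1r lerDl.
have tx : t * (x + y) = x by rewrite mulfVK ?gt_eqF.
have := hc _ _ t (ltW s0) (lexx 0) t0 t1.
have := hc _ _ (1 - t) (ltW s0) (lexx 0) ltac:(lra) ltac:(lra).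
have ty : (1 - t) * (x + y) = y by rewrite mulrBl mul1r tx addrAC subrr add0r.
rewrite !mulr0 !addr0 tx ty; lra.
Qed.

Lemma mixed_diff3_normN f a b c :
  mixed_diff3 (fun x => f `|x|) (- a) (- b) (- c) = mixed_diff3 (fun x => f `|x|) a b c.
Proof. by rewrite /mixed_diff3 -!opprD !normrN. Qed.

Lemma mixed_diff3_norm_nonneg f a b c : 0 <= a -> 0 <= b -> 0 <= c ->
  mixed_diff3 (fun x => f `|x|) a b c = mixed_diff3 f a b c.
Proof.
by move=> a0 b0 c0; rewrite /mixed_diff3 normr0 !ger0_norm // ?addr_ge0.
Qed.

Lemma mixed_diff3_norm_opp_ge0 f a b d :
  three_convex_nonneg f -> nondecreasing_nonneg f -> concave_nonneg f ->
  0 <= a -> 0 <= b -> 0 <= d -> 0 <= mixed_diff3 (fun x => f `|x|) a b (- d).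
Proof.
move=> h3 hm hc a0 b0 d0.
have [abd|dab] := lerP (a + b) d.
  suff -> : mixed_diff3 (fun x => f `|x|) a b (- d) = mixed_diff3 f a b (d - a - b).
    by apply: mixed_diff3_ge0 => //; lra.
  rewrite /mixed_diff3 normr0 normrN (ger0_norm a0) (ger0_norm b0) (ger0_norm d0).
  rewrite (ger0_norm (addr_ge0 a0 b0)) (addrC (- d)) !ler0_norm; try lra.
  have -> : a + b + (d - a - b) = d by ring.
  have -> : b + (d - a - b) = - (a - d) by ring.
  have -> : d - a - b + a = - (b - d) by ring.
  have -> : - (a + b - d) = d - a - b by ring.
  lra.
rewrite /mixed_diff3 normr0 normrN (ger0_norm a0) (ger0_norm b0) (ger0_norm d0).
rewrite (ger0_norm (addr_ge0 a0 b0)) (addrC (- d)) (@ger0_norm _ (a + b - d)); last by lra.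
have sub := concave_subadditive hc.
(* [lerP] also rewrites [|a - d|] and [|b - d|]. *)
have [da|ad] := lerP d a; have [db|bd] := lerP d b.
- have := sub (a + b - d) d ltac:(lra) d0; rewrite (_ : a + b - d + d = a + b); last by ring.
  have := hm (a - d) a ltac:(lra) ltac:(lra); have := hm (b - d) b ltac:(lra) ltac:(lra).
  lra.
- have := sub a b a0 b0; have := hm (d - b) d ltac:(lra) ltac:(lra).
  have := hm (a - d) (a + b - d) ltac:(lra) ltac:(lra).
  lra.
- have := sub a b a0 b0; have := hm (d - a) d ltac:(lra) ltac:(lra).
  have := hm (b - d) (a + b - d) ltac:(lra) ltac:(lra).
  lra.
- have := sub (a + b - d) d ltac:(lra) d0; rewrite (_ : a + b - d + d = a + b); last by ring.
  have := hm (d - a) b ltac:(lra) ltac:(lra); have := hm (d - b) a ltac:(lra) ltac:(lra).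
  lra.
Qed.

Lemma mixed_diff3_norm_ge0 f a b c :
  three_convex_nonneg f -> nondecreasing_nonneg f -> concave_nonneg f ->
  0 <= mixed_diff3 (fun x => f `|x|) a b c.
Proof.
move=> h3 hm hc.
have nonneg_pair u v w : 0 <= u -> 0 <= v -> 0 <= mixed_diff3 (fun x => f `|x|) u v w.
  move=> u0 v0; have [w0|w0] := leP 0 w.
    by rewrite mixed_diff3_norm_nonneg // mixed_diff3_ge0.
  by rewrite -(opprK w); apply: mixed_diff3_norm_opp_ge0 => //; lra.
have same_sign u v w : (0 <= u) = (0 <= v) -> 0 <= mixed_diff3 (fun x => f `|x|) u v w.
  have [u0 /esym v0|u0 /esym/negbT] := leP 0 u; first exact: nonneg_pair.
  by rewrite -ltNge -mixed_diff3_normN => v0; apply: nonneg_pair; lra.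
have [ab|ab] := eqVneq (0 <= a) (0 <= b); first exact: same_sign.
have [ac|ac] := eqVneq (0 <= a) (0 <= c); first by rewrite mixed_diff3AC same_sign.
rewrite mixed_diff3C mixed_diff3AC same_sign //.
by move: ab ac; case: (0 <= a); case: (0 <= b); case: (0 <= c).
Qed.
End ThreeConvex.

Section RealMatrices.
Variable R : realFieldType.
Implicit Types (n : nat).

Lemma trmx_mul_self_ge0 n (u : 'cV[R]_n) : 0 <= (u^T *m u) 0 0.
Proof. by rewrite mxE; apply: sumr_ge0 => i _; rewrite mxE -expr2 sqr_ge0. Qed.

Lemma trmx_mul_self_eq0 n (u : 'cV[R]_n) : ((u^T *m u) 0 0 == 0) = (u == 0).
Proof.
apply/idP/eqP => [|->]; last by rewrite mulmx0 mxE.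
rewrite mxE psumr_eq0 => [/allP u0|i _]; last by rewrite mxE -expr2 sqr_ge0.
apply/matrixP => i j; rewrite (ord1 j) !mxE.
by have := u0 i (mem_index_enum _); rewrite mxE -expr2 sqrf_eq0 => /eqP.
Qed.

(* Householder reflection; [reflmx 0 = 1%:M] since [2 / 0 = 0]. *)
Definition reflmx n (u : 'cV[R]_n) : 'M[R]_n :=
  1%:M - (2 / (u^T *m u) 0 0) *: (u *m u^T).

Lemma trmx_reflmx n (u : 'cV[R]_n) : (reflmx u)^T = reflmx u.
Proof. by rewrite /reflmx linearB /= linearZ /= trmx1 trmx_mul trmxK. Qed.

Lemma reflmx_orthogonal n (u : 'cV[R]_n) : reflmx u *m (reflmx u)^T = 1%:M.
Proof.
rewrite trmx_reflmx /reflmx; set s := (u^T *m u) 0 0.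
have uu : u *m u^T *m (u *m u^T) = s *: (u *m u^T).
  by rewrite mulmxA -(mulmxA u) [u^T *m u]mx11_scalar mul_mx_scalar -scalemxAl.
rewrite mulmxBl mul1mx mulmxBr mulmx1 -scalemxAl -scalemxAr uu !scalerA.
have [->|s0] := eqVneq s 0; first by rewrite invr0 !mulr0 !scale0r !subr0.
have -> : 2 / s * (2 / s) * s = 2 / s + 2 / s by field.
set P := (2 / s) *: _.
have PP : P - (P + P) = - P by rewrite opprD addNKr.
by rewrite scalerDl -/P PP opprK subrK.
Qed.

Lemma trmx_mx11 (A : 'M[R]_1) : A^T = A.
Proof. by rewrite [A]mx11_scalar tr_scalar_mx. Qed.

Lemma reflmx_swap n (p q : 'cV[R]_n) : p^T *m p = q^T *m q -> reflmx (p - q) *m p = q.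
Proof.
move=> pq; set u := p - q; set s := (u^T *m u) 0 0; set t := (u^T *m p) 0 0.
have uq : u^T *m q = - (u^T *m p).
  by rewrite /u linearB /= !mulmxBl -pq -[q^T *m p]trmx_mx11 trmx_mul trmxK opprB.
have st : s = t + t by rewrite /s {2}/u mulmxBr uq opprK mxE.
rewrite /reflmx mulmxBl mul1mx -scalemxAl -mulmxA [u^T *m p]mx11_scalar -/t.
rewrite mul_mx_scalar scalerA.
have [u0|u0] := eqVneq u 0.
  by rewrite u0 scaler0 subr0; apply/eqP; rewrite -subr_eq0 -/u u0.
have s0 : s != 0 by rewrite trmx_mul_self_eq0.
have -> : 2 / s * t = 1 by rewrite st in s0 *; field.
by rewrite scale1r /u opprB addrC subrK.
Qed.

Lemma mulmx_block_diag n1 n2 (A B : 'M[R]_n1) (D E : 'M[R]_n2) :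
  block_mx A 0 0 D *m block_mx B 0 0 E = block_mx (A *m B) 0 0 (D *m E).
Proof. by rewrite mulmx_block !mulmx0 !mul0mx !addr0 add0r. Qed.

Lemma conj_symmetric_block n (M H : 'M[R]_(1 + n)) r :
  M^T = M -> H *m H^T = 1%:M -> M *m col 0 H = r *: col 0 H ->
  H^T *m M *m H = block_mx (ulsubmx (H^T *m M *m H)) 0 0 (drsubmx (H^T *m M *m H)).
Proof.
move=> sM HH MH; set N := H^T *m M *m H.
have sN : N^T = N by rewrite /N !trmx_mul trmxK sM mulmxA.
have N0 : col 0 N = r *: col 0 1%:M.
  by rewrite !colE -mulmxA -colE -mulmxA MH -scalemxAr colE mulmxA (mulmx1C HH).
have dl : dlsubmx N = 0.
  apply/matrixP => i j; have := congr1 (fun v : 'cV_(1 + n) => v (rshift 1 i) 0) N0.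
  by rewrite (ord1 j) !mxE mulr0 (_ : lshift n 0 = 0) //; apply: val_inj.
have ur : ursubmx N = 0 by apply: trmx_inj; rewrite trmx_ursub sN dl trmx0.
by rewrite -{1}(submxK N) ur dl.
Qed.
End RealMatrices.

Section SymmetricMatrices.
Variable R : rcfType.
Implicit Types (n : nat).

Lemma Re_mulmx_real m n p (v : 'M[R[i]]_(m, n)) (M : 'M[R]_(n, p)) :
  map_mx (@complex.Re R) (v *m map_mx (real_complex R) M) = map_mx (@complex.Re R) v *m M.
Proof.
apply/matrixP => i j; rewrite !mxE (raddf_sum (@complex.Re R : Rcomplex R -> R)).
by apply: eq_bigr => k _; rewrite !mxE; case: (v i k) => a b /=; rewrite mulr0 subr0.
Qed.

Lemma Im_mulmx_real m n p (v : 'M[R[i]]_(m, n)) (M : 'M[R]_(n, p)) :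
  map_mx (@complex.Im R) (v *m map_mx (real_complex R) M) = map_mx (@complex.Im R) v *m M.
Proof.
apply/matrixP => i j; rewrite !mxE (raddf_sum (@complex.Im R : Rcomplex R -> R)).
by apply: eq_bigr => k _; rewrite !mxE; case: (v i k) => a b /=; rewrite mulr0 add0r.
Qed.

Lemma symmetric_rotation_eq0 n (M : 'M[R]_n) (x y : 'cV[R]_n) (r s : R) : M^T = M ->
  M *m x = r *: x - s *: y -> M *m y = r *: y + s *: x -> (x != 0) || (y != 0) -> s = 0.
Proof.
move=> sM Mx My xy0.
have yMx : (M *m y)^T *m x = y^T *m (M *m x) by rewrite trmx_mul sM mulmxA.
move: yMx; rewrite Mx mulmxBr -!scalemxAr My linearD /= !linearZ /= mulmxDl -!scalemxAl.
move/addrI/eqP; rewrite -subr_eq0 scalerN opprK -scalerDr scaler_eq0 => /orP[/eqP //|/eqP xy].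
move: xy0; rewrite -!trmx_mul_self_eq0 -negb_and -paddr_eq0 ?trmx_mul_self_ge0 //.
by have := congr1 (fun A : 'M[R]_1 => A 0 0) xy; rewrite mxE [X in _ = X]mxE => ->; rewrite eqxx.
Qed.

Lemma real_common_eigenvector n (As : seq 'M[R]_n.+1) :
  {in As, forall M, M^T = M} -> {in As &, forall M N, M *m N = N *m M} ->
  exists2 x : 'cV[R]_n.+1, x != 0 & {in As, forall M, exists r, M *m x = r *: x}.
Proof.
move=> sAs cAs.
have cC : {in map (map_mx (real_complex R)) As &, forall A B, comm_mx A B}.
  by move=> _ _ /mapP[M MA ->] /mapP[N NA ->]; rewrite /comm_mx -!map_mxM cAs.
have [v v0 /allP stable] := common_eigenvector (ltn0Sn n) cC.
(* Since a real symmetric matrix has real eigenvalues, the real and imaginary parts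
   of [v] are common real eigenvectors. *)
pose x := (map_mx (@complex.Re R) v)^T; pose y := (map_mx (@complex.Im R) v)^T.
have xy0 : (x != 0) || (y != 0).
  apply: contraNT v0; rewrite negb_or !negbK => /andP[/eqP x0 /eqP y0].
  apply/eqP/matrixP => i j; move/matrixP/(_ j i): x0; move/matrixP/(_ j i): y0.
  by rewrite !mxE; case: (v i j) => a b /= -> ->.
have eig M : M \in As -> exists r, M *m x = r *: x /\ M *m y = r *: y.
  move=> MA; have /sub_rVP[mu vM] := stable _ (map_f _ MA).
  have Mx : M *m x = complex.Re mu *: x - complex.Im mu *: y.
    rewrite -[M](sAs M MA) -trmx_mul -Re_mulmx_real vM.
    by apply/matrixP => i j; rewrite !mxE; case: (mu) => ? ?; case: (v j i) => ? ? /=; ring.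
  have My : M *m y = complex.Re mu *: y + complex.Im mu *: x.
    rewrite -[M](sAs M MA) -trmx_mul -Im_mulmx_real vM.
    by apply/matrixP => i j; rewrite !mxE; case: (mu) => ? ?; case: (v j i) => ? ? /=; ring.
  have s0 := symmetric_rotation_eq0 (sAs M MA) Mx My xy0.
  by exists (complex.Re mu); rewrite Mx My s0 !scale0r subr0 addr0.
have [x0|x0] := eqVneq x 0.
  exists y => [|M /eig[r [_ My]]]; last by exists r.
  by move: xy0; rewrite x0 eqxx.
by exists x => // M /eig[r [? _]]; exists r.
Qed.

Lemma real_common_eigen_orthogonal n (As : seq 'M[R]_n.+1) :
  {in As, forall M, M^T = M} -> {in As &, forall M N, M *m N = N *m M} ->
  exists2 H : 'M[R]_n.+1, H *m H^T = 1%:M &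
    {in As, forall M, exists r, M *m col 0 H = r *: col 0 H}.
Proof.
move=> sAs cAs; have [x x0 eig] := real_common_eigenvector sAs cAs.
set s := (x^T *m x) 0 0; set q := (Num.sqrt s)^-1 *: x.
have s0 : 0 < s by rewrite lt_def trmx_mul_self_eq0 x0 trmx_mul_self_ge0.
have qq : q^T *m q = 1%:M.
  rewrite !linearZ /= -scalemxAl scalerA [x^T *m x]mx11_scalar -/s scale_scalar_mx.
  by rewrite -invfM -expr2 sqr_sqrtr ?mulVf ?gt_eqF ?ltW.
pose e : 'cV[R]_n.+1 := delta_mx 0 0.
have ee : e^T *m e = 1%:M.
  by rewrite trmx_delta mul_delta_mx; apply/matrixP => i j; rewrite !ord1 !mxE.
exists (reflmx (e - q)); first exact: reflmx_orthogonal.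
rewrite colE reflmx_swap ?ee // => M /eig[r Mx].
by exists r; rewrite -scalemxAr Mx !scalerA mulrC.
Qed.

Theorem symmetric_commuting_orthogonal_diag n (As : seq 'M[R]_n) :
  {in As, forall M, M^T = M} -> {in As &, forall M N, M *m N = N *m M} ->
  exists2 U : 'M[R]_n, U *m U^T = 1%:M & {in As, forall M, is_diag_mx (U^T *m M *m U)}.
Proof.
elim: n As => [|n IH] As sAs cAs.
  by exists 1%:M => [|M _]; [rewrite trmx1 mulmx1 | apply/is_diag_mxP => -[]].
(* Conjugation by [H] splits off the common eigenvector as a 1 x 1 block. *)
have [H HH eig] := real_common_eigen_orthogonal sAs cAs.
pose N M : 'M[R]_(1 + n) := H^T *m M *m H.
have Nblock M : M \in As -> N M = block_mx (ulsubmx (N M)) 0 0 (drsubmx (N M)).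
  by move=> /[dup] MA /eig[r MH]; exact: conj_symmetric_block (sAs M MA) HH MH.
pose D M := drsubmx (N M).
have DD M M' : M \in As -> M' \in As -> D M *m D M' = D (M *m M').
  move=> MA MA'; rewrite /D [in LHS]/N (_ : N (M *m M') = N M *m N M').
    by rewrite (Nblock M MA) (Nblock M' MA') mulmx_block_diag block_mxKdr.
  by rewrite /N !mulmxA -(mulmxA _ H) HH mulmx1.
have sD : {in map D As, forall M, M^T = M}.
  by move=> _ /mapP[M MA ->]; rewrite /D trmx_drsub /N !trmx_mul trmxK (sAs M MA) mulmxA.
have cD : {in map D As &, forall M M', M *m M' = M' *m M}.
  by move=> _ _ /mapP[M MA ->] /mapP[M' MA' ->]; rewrite !DD // cAs.
have [V VV HV] := IH _ sD cD.
pose B : 'M[R]_(1 + n) := block_mx 1%:M 0 0 V.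
have BT : B^T = block_mx 1%:M 0 0 V^T by rewrite tr_block_mx !trmx0 trmx1.
exists (H *m B).
  rewrite trmx_mul BT mulmxA -(mulmxA H) (@mulmx_block_diag _ 1 n) mulmx1 VV -scalar_mx_block.
  by rewrite mulmx1 HH.
move=> M MA; rewrite trmx_mul BT -!mulmxA (mulmxA M) (mulmxA H^T) (mulmxA H^T M).
rewrite -/(N M) Nblock // /B !(@mulmx_block_diag _ 1 n) mulmx1 mul1mx.
rewrite (@is_diag_block_mx _ 1 n 1 n) // !eqxx mx11_is_diag mulmxA HV //.
exact: map_f.
Qed.
End SymmetricMatrices.

Lemma diag_mx_map_comm (R : idomainType) n (f : R -> R) (W : 'M[R]_n) (d e : 'rV[R]_n) :
  diag_mx e *m W = W *m diag_mx d -> diag_mx (map_mx f e) *m W = W *m diag_mx (map_mx f d).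
Proof.
rewrite !mul_diag_mx !mul_mx_diag => /matrixP eW; apply/matrixP => i j.
have := eW i j; rewrite !mxE => eWij.
have [->|W0] := eqVneq (W i j) 0; first by rewrite mulr0 mul0r.
have -> : e 0 i = d 0 j by apply: (mulIf W0); rewrite eWij mulrC.
by rewrite mulrC.
Qed.

Section MatrixFunctions.
Variable R : realType.
Implicit Types (n : nat) (f : R -> R).

Lemma mxfun_orth_diag n f (M U : 'M[R]_n) d :
  orth_diagonalizes M U d -> mxfun f M = U *m diag_mx (map_mx f d) *m U^T.
Proof.
(* The orthogonal [W := V^T U] relating the diagonalization [V, e] chosen by [xget]
   to [U, d] intertwines [diag_mx e] and [diag_mx d], hence also their images by [f]. *)
move=> [UU eM]; rewrite /mxfun; case: xgetP => [[V e] /= _ [VV eM'] | none]; last first.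
  by case: (none (U, d)).
have UU' := mulmx1C UU; have VV' := mulmx1C VV.
have WW : V^T *m U *m (V^T *m U)^T = 1%:M.
  by rewrite trmx_mul trmxK mulmxA -(mulmxA _ U) UU mulmx1 VV'.
have eW : diag_mx e *m (V^T *m U) = V^T *m U *m diag_mx d.
  have -> : diag_mx e = V^T *m M *m V by rewrite eM' !mulmxA VV' mul1mx -mulmxA VV' mulmx1.
  by rewrite eM !mulmxA -!(mulmxA _ V) VV mulmx1 -(mulmxA _ U^T) UU' mulmx1.
have VW : V *m (V^T *m U) = U by rewrite mulmxA VV mul1mx.
have WV : (V^T *m U)^T *m V^T = U^T by rewrite trmx_mul trmxK -mulmxA VV mulmx1.
move: (V^T *m U) WW eW VW WV => W WW eW VW WV.
have -> : V *m diag_mx (map_mx f e) *m V^T = V *m (diag_mx (map_mx f e) *m W) *m W^T *m V^T.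
  by rewrite -!mulmxA (mulmxA W) WW mul1mx.
by rewrite (diag_mx_map_comm f eW) !mulmxA VW -(mulmxA _ W^T) WV.
Qed.

Lemma mxfun_mxabs_orth_diag n f (M U : 'M[R]_n) d : orth_diagonalizes M U d ->
  mxfun f (mxabs M) = U *m diag_mx (map_mx (fun x => f `|x|) d) *m U^T.
Proof.
move=> [UU eM].
have M2 : orth_diagonalizes (M *m M) U (map_mx (fun x => x ^+ 2) d).
  split=> //; rewrite eM !mulmxA -(mulmxA _ U^T) (mulmx1C UU) mulmx1 -(mulmxA U).
  by rewrite mulmx_diag; congr (_ *m diag_mx _ *m _); apply/rowP => i; rewrite !mxE.
rewrite /mxabs (mxfun_orth_diag _ M2) (mxfun_orth_diag f (conj UU erefl : orth_diagonalizes _ U _)).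
by congr (_ *m diag_mx _ *m _); apply/rowP => i; rewrite !mxE sqrtr_sqr.
Qed.

Lemma conj_diag_mxD n (U : 'M[R]_n) (a b : 'rV[R]_n) :
  U *m diag_mx a *m U^T + U *m diag_mx b *m U^T = U *m diag_mx (a + b) *m U^T.
Proof. by rewrite raddfD mulmxDr mulmxDl. Qed.

Lemma orth_diagonalizesD n (A B U : 'M[R]_n) a b :
  orth_diagonalizes A U a -> orth_diagonalizes B U b -> orth_diagonalizes (A + B) U (a + b).
Proof. by move=> [UU ->] [_ ->]; split; rewrite // conj_diag_mxD. Qed.

Lemma loewner_le_conj_diag n (U : 'M[R]_n) (l r : 'rV[R]_n) : (forall i, l 0 i <= r 0 i) ->
  loewner_le (U *m diag_mx l *m U^T) (U *m diag_mx r *m U^T).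
Proof.
move=> lr x; have quad d : (x^T *m (U *m diag_mx d *m U^T) *m x) 0 0 =
    \sum_k d 0 k * (U^T *m x) k 0 ^+ 2.
  rewrite !mulmxA -(mulmxA _ U^T x) -[x^T *m U]trmxK trmx_mul trmxK mxE.
  by apply: eq_bigr => k _; rewrite mul_mx_diag !mxE; ring.
rewrite !quad; apply: ler_sum => k _; exact/ler_wpM2r/lr/sqr_ge0.
Qed.

Lemma symmetric_commuting_orth_diagonalizes n (As : seq 'M[R]_n) :
  {in As, forall M, M^T = M} -> {in As &, forall M N, M *m N = N *m M} ->
  exists U, {in As, forall M, exists d, orth_diagonalizes M U d}.
Proof.
move=> sAs cAs; have [U UU diagU] := symmetric_commuting_orthogonal_diag sAs cAs.
exists U => M /diagU/diag_mxP[d Md]; exists d; split=> //.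
by rewrite -Md !mulmxA UU mul1mx -mulmxA UU mulmx1.
Qed.
End MatrixFunctions.

Theorem theorem11 (R : realType) (f : R -> R)
  (hcont : {within [set x : R | 0 <= x], continuous f})
  (h3 : three_convex_nonneg f)
  (hmono : nondecreasing_nonneg f)
  (hconc : concave_nonneg f)
  (n : nat) (A B C : 'M[R]_n)
  (hA : A^T = A) (hB : B^T = B) (hC : C^T = C)
  (hAB : A *m B = B *m A) (hBC : B *m C = C *m B) (hCA : C *m A = A *m C) :
  loewner_le
    (mxfun f (mxabs (A + B)) + mxfun f (mxabs (B + C))
       + mxfun f (mxabs (C + A)) + f 0 *: 1%:M)
    (mxfun f (mxabs A) + mxfun f (mxabs B) + mxfun f (mxabs C)
       + mxfun f (mxabs (A + B + C))).
Proof.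
have sABC : {in [:: A; B; C], forall M, M^T = M}.
  by move=> M; rewrite !inE => /or3P[] /eqP->.
have cABC : {in [:: A; B; C] &, forall M N, M *m N = N *m M}.
  by move=> M N; rewrite !inE => /or3P[] /eqP-> /or3P[] /eqP->.
have [U diagU] := symmetric_commuting_orth_diagonalizes sABC cABC.
have [[a Aa] [b Bb] [c Cc]] : [/\ exists a, orth_diagonalizes A U a,
    exists b, orth_diagonalizes B U b & exists c, orth_diagonalizes C U c].
  by split; apply: diagU; rewrite !inE eqxx ?orbT.
have f0 : f 0 *: 1%:M = U *m diag_mx (const_mx (f 0)) *m U^T.
  by case: Aa => UU _; rewrite diag_const_mx mul_mx_scalar -scalemxAl UU.
have ABCd := orth_diagonalizesD (orth_diagonalizesD Aa Bb) Cc.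
rewrite f0 !(mxfun_mxabs_orth_diag f (orth_diagonalizesD Aa Bb))
  (mxfun_mxabs_orth_diag f (orth_diagonalizesD Bb Cc))
  (mxfun_mxabs_orth_diag f (orth_diagonalizesD Cc Aa)) (mxfun_mxabs_orth_diag f Aa)
  (mxfun_mxabs_orth_diag f Bb) (mxfun_mxabs_orth_diag f Cc) (mxfun_mxabs_orth_diag f ABCd).
rewrite !conj_diag_mxD; apply: loewner_le_conj_diag => i; rewrite !mxE.
have := mixed_diff3_norm_ge0 (a 0 i) (b 0 i) (c 0 i) h3 hmono hconc.
rewrite /mixed_diff3 normr0; lra.
Qed.
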